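(* Let $\mathbb{X}=[-1,1]$ with prior $\zeta$ the uniform distribution, $\mathbb{Y}^1=\{1,2,3\}$, $\mathbb{Y}^2=\{0\}$, $\mathbb{U}^1=\mathbb{U}^2=[-1,1]$. For $m\ge1$ let $\mu_m$ be the information structure in which $y^2=0$ always and $y^1=1$ if $x\in[-1,-\tfrac12-\tfrac1{8m})$, $y^1=2$ if $x\in[-\tfrac12-\tfrac1{8m},\tfrac12+\tfrac1{4m}]$, $y^1=3$ if $x\in(\tfrac12+\tfrac1{4m},1]$; let $\mu$ be the information structure with $y^2=0$ always and $y^1=1,2,3$ according as $x\in[-1,-\tfrac12)$, $[-\tfrac12,\tfrac12]$, $(\tfrac12,1]$. Consider the two-player non-zero-sum game with costs $$c^1(x,u^1,u^2)=(x-u^1)^2-(u^2)^2,\qquad c^2(x,u^1,u^2)=\begin{cases}(u^2)^2,&u^1=0,\\(u^2-1)^2,&u^1\ne0.\end{cases}$$ Then $\|\mu_m-\mu\|_{TV}\to0$; for every $m$, in every Nash equilibrium under $\mu_m$ Player 2's expected cost is $0$, whereas in every Nash equilibrium under $\mu$ Player 2's expected cost is $1/4$. Hence, in general non-zero-sum games with bounded measurable costs, a player's equilibrium cost need not be continuous under total variation convergence of information structures.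
   Context: An information structure is the joint law of $(x,y^1,y^2)$ on $\mathbb{X}\times\mathbb{Y}^1\times\mathbb{Y}^2$. Player $i$ chooses a measurable policy $\gamma^i:\mathbb{Y}^i\to\mathbb{U}^i$ and incurs expected cost $J^i(\mu,\gamma^1,\gamma^2)=E^\mu[c^i(x,\gamma^1(y^1),\gamma^2(y^2))]$, which each player seeks to minimize. A Nash equilibrium is a pair $(\gamma^{1,*},\gamma^{2,*})$ such that $J^1(\mu,\gamma^{1,*},\gamma^{2,*})\le J^1(\mu,\gamma^1,\gamma^{2,*})$ and $J^2(\mu,\gamma^{1,*},\gamma^{2,*})\le J^2(\mu,\gamma^{1,*},\gamma^2)$ for all policies $\gamma^1,\gamma^2$. $\|\mu-\nu\|_{TV}=2\sup_B|\mu(B)-\nu(B)|$. *)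

From HB Require Import structures.
From mathcomp Require Import all_boot all_order all_algebra.
From mathcomp Require Import all_classical all_reals all_analysis.

Set Implicit Arguments.
Unset Strict Implicit.
Unset Printing Implicit Defensive.

Import Order.TTheory GRing.Theory Num.Theory.
Import numFieldNormedType.Exports.

Local Open Scope classical_set_scope.
Local Open Scope ring_scope.

(* Observation space of player 1, Y^1 = {1,2,3}: the ordinal k : 'I_3
   stands for the observation k+1. *)
Definition Y1 : Type := 'I_3.
HB.instance Definition _ := Choice.on Y1.
HB.instance Definition _ := isPointed.Build Y1 (@ord0 2).
HB.instance Definition _ := @isMeasurable.Build default_measure_display
  Y1 discrete_measurable discrete_measurable0
  discrete_measurableC discrete_measurableU.

Definition y_1 : Y1 := @Ordinal 3 0 erefl.
Definition y_2 : Y1 := @Ordinal 3 1 erefl.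
Definition y_3 : Y1 := @Ordinal 3 2 erefl.

(* Y^2 = {0} is the one-point type unit. X = [-1,1] is realized inside R,
   the prior being the uniform law on [-1,1]. *)
Definition Omega (R : realType) : Type := ((R * Y1) * unit)%type.

Lemma ltN11 (R : realType) : (-1 < 1 :> R).
Proof. by rewrite gtrN. Qed.

Definition zeta (R : realType) := uniform_prob (ltN11 R).

Definition obs (R : realType) (a b : R) (x : R) : Y1 :=
  if x < a then y_1 else if x <= b then y_2 else y_3.

(* P is the information structure (joint law of (x,y^1,y^2)) induced by the
   uniform prior and the observation map obs a b, with y^2 = 0 always *)
Definition is_info_structure (R : realType) (P : probability (Omega R) R)
  (a b : R) : Prop :=
  forall B : set (Omega R), measurable B ->
    P B = @zeta R ((fun x => ((x, obs a b x), tt)) @^-1` B).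

Definition policy1 (R : realType) (g : Y1 -> R) : Prop :=
  measurable_fun setT g /\ forall y, -1 <= g y <= 1.
Definition policy2 (R : realType) (g : unit -> R) : Prop :=
  measurable_fun setT g /\ forall y, -1 <= g y <= 1.

Definition c1 (R : realType) (x u1 u2 : R) : R := (x - u1) ^+ 2 - u2 ^+ 2.
Definition c2 (R : realType) (x u1 u2 : R) : R :=
  if u1 == 0 then u2 ^+ 2 else (u2 - 1) ^+ 2.

Definition J (R : realType) (P : probability (Omega R) R)
  (c : R -> R -> R -> R) (g1 : Y1 -> R) (g2 : unit -> R) : \bar R :=
  (\int[P]_w (c w.1.1 (g1 w.1.2) (g2 w.2))%:E)%E.

Definition Nash (R : realType) (P : probability (Omega R) R)
  (g1 : Y1 -> R) (g2 : unit -> R) : Prop :=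
  [/\ policy1 g1, policy2 g2,
      (forall g1', policy1 g1' -> (J P (@c1 R) g1 g2 <= J P (@c1 R) g1' g2)%E) &
      (forall g2', policy2 g2' -> (J P (@c2 R) g1 g2 <= J P (@c2 R) g1 g2')%E)].

Definition tv (R : realType) (P Q : probability (Omega R) R) : \bar R :=
  (2%:E * ereal_sup [set `|P B - Q B|%E | B in [set B | measurable B]])%E.

From HB Require Import structures.
From mathcomp Require Import all_boot all_order all_algebra.
From mathcomp Require Import all_classical all_reals all_analysis.
From mathcomp Require Import measurable_realfun ftc.
From mathcomp Require Import ring lra.

Import Order.TTheory GRing.Theory Num.Theory.
Import numFieldNormedType.Exports.

Local Open Scope classical_set_scope.
Local Open Scope ring_scope.

(* All structures considered have a uniform state x on [-1,1], a trivial
   observation for player 2, and player 1 observing in which of the three cells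
   [-1,a[, [a,b], ]b,1] the state lies, for -1 < a < b < 1.
   1. Every expectation under such a structure is half the Lebesgue integral of
      the integrand along the three cells (integral_info_structure).  Hence J^1
      is (up to terms not involving g^1) the mean-square error of g^1, and J^2
      under player 1's policy only depends on which cells g^1 maps to 0.
   2. Player 1's unique best response, whatever player 2 does, is the vector of
      cell midpoints (cell_means).  With it, J^2 is a quadratic in u = g^2(0)
      whose minimum is p(2-p)/4, p being the total length of the cells whose
      midpoint is 0 (zero_mass; nash_equilibria).  For mu_m no midpoint is 0, so p = 0; for mu the
      middle cell [-1/2,1/2] is centred, so p = 1 and the cost is 1/4.
   3. Two such structures differ in TV by at most the length of the region where
      their observation maps disagree (tv_info_bound), which is 3/(8m) here. *)

Section InfoStructureGame.
Set Implicit Arguments.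
Unset Strict Implicit.
Variable R : realType.
Local Notation leb := (@lebesgue_measure R).

Lemma Y1_cases (y : Y1) : [\/ y = y_1, y = y_2 | y = y_3].
Proof.
by case: y => -[|[|[|//]]] Hy; [apply: Or31|apply: Or32|apply: Or33]; apply: val_inj.
Qed.

Lemma measurable_obs (a b : R) : measurable_fun setT (obs a b).
Proof.
rewrite /obs; apply: measurable_fun_if => //.
  by apply: measurable_fun_ltr => //; exact: measurable_cst.
apply: measurable_funTS; apply: measurable_fun_if => //.
by apply: measurable_fun_ler => //; exact: measurable_cst.
Qed.

Definition outcome (a b : R) (x : R) : Omega R := ((x, obs a b x), tt).

Lemma measurable_outcome (a b : R) : measurable_fun setT (outcome a b).
Proof.
apply: measurable_fun_pair; last exact: measurable_cst.
by apply: measurable_fun_pair => //; exact: measurable_obs.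
Qed.

Definition outcome_mfun (a b : R) :
    {mfun g_sigma_algebraType (R.-ocitv.-measurable) >-> Omega R} :=
  HB.pack (outcome a b) (@isMeasurableFun.Build _ _
    (g_sigma_algebraType (R.-ocitv.-measurable)) (Omega R) (outcome a b)
    (measurable_outcome a b)).

Lemma itv_split3 (a b : R) : -1 <= a -> a <= b -> b <= 1 ->
  `[-1, 1]%classic = `[-1, a[%classic `|` `[a, b]%classic `|` `]b, 1]%classic
  :> set R.
Proof.
move=> h1 h2 h3; apply/seteqP; split => x /=; rewrite !in_itv/=.
  move=> /andP[x1 x2].
  case: (ltP x a) => xa; first by left; left; rewrite x1.
  case: (leP x b) => xb; first by left; right.
  by right; rewrite x2.
by move=> [[/andP[p q]|/andP[p q]]|/andP[p q]]; apply/andP; split; lra.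
Qed.

Lemma integral_info_structure (P : probability (Omega R) R) (a b : R) :
  -1 < a -> a <= b -> b < 1 -> is_info_structure P a b ->
  forall f : Omega R -> R, measurable_fun setT f -> (forall w, 0 <= f w) ->
  (\int[P]_w (f w)%:E = 2^-1%:E *
     (\int[leb]_(x in `[(-1)%R, a[) (f ((x, y_1), tt))%:E
      + \int[leb]_(x in `[a, b]) (f ((x, y_2), tt))%:E
      + \int[leb]_(x in `]b, 1%R]) (f ((x, y_3), tt))%:E))%E.
Proof.
move=> ha hab hb HP f mf f0.
rewrite (eq_measure_integral (distribution (@zeta R) (outcome_mfun a b))); last first.
  by move=> A mA _; exact: (HP A mA).
rewrite ge0_integral_distribution//; last exact/measurable_EFinP.
rewrite integral_uniform//=; last 2 first.
- apply/measurable_EFinP; apply: measurableT_comp => //; exact: measurable_outcome.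
- by move=> x; rewrite lee_fin.
have mfo : measurable_fun setT (fun x => (f (outcome a b x))%:E).
  by apply/measurable_EFinP; apply: measurableT_comp => //; exact: measurable_outcome.
congr (_ * _)%E; first by rewrite opprK.
rewrite (itv_split3 (ltW ha) hab (ltW hb)).
rewrite ge0_integral_setU //=; last 4 first.
- exact: measurableU.
- exact: measurable_funTS.
- by move=> x _; rewrite lee_fin.
- apply/disj_setPS => x; rewrite /= !in_itv/=.
  by move=> -[[/andP[p q]|/andP[p q]] /andP[p' q']]; lra.
rewrite ge0_integral_setU //=; last 3 first.
- exact: measurable_funTS.
- by move=> x _; rewrite lee_fin.
- by apply/disj_setPS => x; rewrite /= !in_itv/= => -[/andP[p q] /andP[p' q']]; lra.
congr (_ + _)%E; first congr (_ + _)%E; apply: eq_integral => x;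
  rewrite inE/= in_itv/= => /andP[p q]; rewrite /outcome /obs.
- by rewrite q.
- by rewrite ltNge p q.
- by rewrite ltNge (ltW (le_lt_trans hab p)) /= leNgt p.
Qed.

(* sq_dev c d v is the integral of (x - v)^2 over [c,d]. *)
Definition sq_dev (c d v : R) : R := ((d - v) ^+ 3 - (c - v) ^+ 3) / 3.

Lemma is_derive_cube_dev (v x : R) :
  is_derive x 1 (fun x : R => (x - v) ^+ 3 / 3) ((x - v) ^+ 2).
Proof. by apply: is_derive_eq; rewrite -![_ *: _]/(_ * _); field. Qed.

Lemma integral_sqr_dev (c d v : R) : c < d ->
  (\int[leb]_(x in `[c, d]) ((x - v) ^+ 2)%:E = (sq_dev c d v)%:E)%E.
Proof.
move=> cd.
have cF : continuous (fun x : R => (x - v) ^+ 3 / 3).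
  move=> x; apply/differentiable_continuous/derivable1_diffP.
  by case: (is_derive_cube_dev v x).
rewrite (@continuous_FTC2 _ _ (fun x : R => (x - v) ^+ 3 / 3)) //.
- by rewrite -EFinB /sq_dev mulrBl.
- apply: continuous_in_subspaceT => x _.
  by apply/differentiable_continuous/derivable1_diffP; exact: ex_derive.
- split.
  + by move=> x _; case: (is_derive_cube_dev v x).
  + by apply: cvg_at_right_filter; exact: cF.
  + by apply: cvg_at_left_filter; exact: cF.
- by move=> x _; rewrite derive1E; apply: derive_val; exact: is_derive_cube_dev.
Qed.

(* Bias-variance decomposition: the mean square deviation from v is minimal at
   the midpoint, with excess (d - c) (v - midpoint)^2. *)
Lemma sq_devE (c d v : R) :
  sq_dev c d v = sq_dev c d ((c + d) / 2) + (d - c) * (v - (c + d) / 2) ^+ 2.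
Proof. by rewrite /sq_dev; field. Qed.

(* Player 1's candidate policy: report the midpoint of the observed cell,
   i.e. the conditional mean of the state. *)
Definition cell_means (a b : R) (y : Y1) : R :=
  if y == y_1 then (-1 + a) / 2 else if y == y_2 then (a + b) / 2 else (b + 1) / 2.

Lemma cell_means1 (a b : R) : cell_means a b y_1 = (-1 + a) / 2. Proof. by []. Qed.
Lemma cell_means2 (a b : R) : cell_means a b y_2 = (a + b) / 2. Proof. by []. Qed.
Lemma cell_means3 (a b : R) : cell_means a b y_3 = (b + 1) / 2. Proof. by []. Qed.

(* Twice the excess mean-square error of the estimate g of the state. *)
Definition mse_gap (a b : R) (g : Y1 -> R) : R :=
  (a + 1) * (g y_1 - (-1 + a) / 2) ^+ 2 + (b - a) * (g y_2 - (a + b) / 2) ^+ 2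
  + (1 - b) * (g y_3 - (b + 1) / 2) ^+ 2.

(* Twice the minimal mean-square error, attained by the cell means. *)
Definition mse_min (a b : R) : R :=
  sq_dev (-1) a ((-1 + a) / 2) + sq_dev a b ((a + b) / 2) + sq_dev b 1 ((b + 1) / 2).

Definition zero_mass (a b : R) : R :=
  (a + 1) * ((-1 + a) / 2 == 0)%:R + (b - a) * ((a + b) / 2 == 0)%:R
  + (1 - b) * ((b + 1) / 2 == 0)%:R.

Definition nash_cost2 (a b : R) : R := zero_mass a b * (2 - zero_mass a b) / 4.

Lemma c2E (x u1 u2 : R) :
  c2 x u1 u2 = (u1 == 0)%:R * u2 ^+ 2 + (1 - (u1 == 0)%:R) * (u2 - 1) ^+ 2.
Proof. by rewrite /c2; case: (u1 == 0) => /=; ring. Qed.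

Lemma policy2_cst (u : R) : -1 <= u <= 1 -> policy2 (fun _ : unit => u).
Proof. by move=> hu; split => //; exact: measurable_cst. Qed.

Section Cells.
Variables a b : R.
Hypotheses (ha : -1 < a) (hab : a < b) (hb : b < 1).

Lemma cell_lengths_gt0 : [/\ 0 < a + 1, 0 < b - a & 0 < 1 - b].
Proof. by split; move: ha hab hb; lra. Qed.

Lemma mse_gap_cell_means : mse_gap a b (cell_means a b) = 0.
Proof. by rewrite /mse_gap cell_means1 cell_means2 cell_means3 !subrr; ring. Qed.

Lemma mse_gap_ge0 (g : Y1 -> R) : 0 <= mse_gap a b g.
Proof.
have [w1 w2 w3] := cell_lengths_gt0.
by rewrite /mse_gap !addr_ge0 // mulr_ge0 ?sqr_ge0 ?ltW.
Qed.

Lemma mse_gap_eq0 (g : Y1 -> R) : mse_gap a b g = 0 -> g =1 cell_means a b.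
Proof.
have [w1 w2 w3] := cell_lengths_gt0.
have t_ge0 (w x : R) : 0 < w -> 0 <= w * x ^+ 2.
  by move=> w0; rewrite mulr_ge0 ?sqr_ge0 ?ltW.
rewrite /mse_gap => /eqP; rewrite !paddr_eq0 ?addr_ge0 ?t_ge0 //.
rewrite !mulf_eq0 (gt_eqF w1) (gt_eqF w2) (gt_eqF w3) /= !orbb !subr_eq0.
move=> /andP[/andP[/eqP e1 /eqP e2] /eqP e3] y.
by case: (Y1_cases y) => ->; rewrite ?cell_means1 ?cell_means2 ?cell_means3.
Qed.

Lemma cell_means_policy : policy1 (cell_means a b).
Proof.
have [w1 w2 w3] := cell_lengths_gt0.
split=> // y; rewrite /cell_means.
by case: ifP => _; last case: ifP => _; apply/andP; split; lra.
Qed.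

Lemma zero_mass_bounds : 0 <= zero_mass a b <= 2.
Proof.
have [w1 w2 w3] := cell_lengths_gt0.
have ind (w : R) (t : bool) : 0 < w -> 0 <= w * t%:R <= w.
  by move=> w0; case: t; rewrite /= ?mulr1 ?mulr0 ?lexx ?(ltW w0).
move: (ind _ ((-1 + a) / 2 == 0) w1) (ind _ ((a + b) / 2 == 0) w2).
move: (ind _ ((b + 1) / 2 == 0) w3); rewrite /zero_mass.
by move=> /andP[? ?] /andP[? ?] /andP[? ?]; apply/andP; split; lra.
Qed.

Variable P : probability (Omega R) R.
Hypothesis HP : is_info_structure P a b.

Lemma J1E (g1 : Y1 -> R) (g2 : unit -> R) :
  J P (@c1 R) g1 g2 = (2^-1 * (mse_min a b + mse_gap a b g1) - g2 tt ^+ 2)%:E.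
Proof.
pose h (w : Omega R) := (w.1.1 - g1 w.1.2) ^+ 2.
have mh : measurable_fun setT h.
  apply: measurable_funX; apply: measurable_funB.
    by apply: measurableT_comp => //; apply: measurableT_comp.
  by apply: (measurableT_comp (f := g1)) => //; apply: measurableT_comp.
have hE : (\int[P]_w (h w)%:E = (2^-1 * (mse_min a b + mse_gap a b g1))%:E)%E.
  rewrite (integral_info_structure ha (ltW hab) hb HP mh); last first.
    by move=> w; exact: sqr_ge0.
  rewrite /h /= integral_itv_bndo_bndc; last first.
    by apply/measurable_EFinP; apply: measurable_funX; apply: measurable_funB.
  rewrite integral_itv_obnd_cbnd; last first.
    by apply/measurable_EFinP; apply: measurable_funX; apply: measurable_funB.
  rewrite !integral_sqr_dev // -!EFinD -EFinM /mse_min /mse_gap.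
  by rewrite (sq_devE (-1)) (sq_devE a b) (sq_devE b); congr (_%:E); ring.
have ih : P.-integrable setT (EFin \o h).
  apply/integrableP; split; first exact/measurable_EFinP.
  rewrite (eq_integral (fun w => (h w)%:E)); first by rewrite hE ltry.
  move=> w _; change ((EFin \o h) w) with ((h w)%:E).
  by rewrite abse_EFin ger0_norm // sqr_ge0.
rewrite /J (eq_integral (fun w => (h w)%:E - ((g2 tt) ^+ 2)%:E)%E); last first.
  by move=> [[x y] []] _; rewrite /c1 /h EFinB.
rewrite integralB_EFin //; last exact: finite_measure_integrable_cst.
rewrite integral_cst // [X in (_ * X)%E](_ : _ = 1%E); last exact: probability_setT.
by rewrite mule1 hE -EFinB.
Qed.

Lemma J2E (g1 : Y1 -> R) (g2 : unit -> R) :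
  J P (@c2 R) g1 g2 = (2^-1 * ((a + 1) * c2 0 (g1 y_1) (g2 tt)
     + (b - a) * c2 0 (g1 y_2) (g2 tt) + (1 - b) * c2 0 (g1 y_3) (g2 tt)))%:E.
Proof.
pose f (w : Omega R) := c2 0 (g1 w.1.2) (g2 tt).
rewrite /J (eq_integral (fun w => (f w)%:E)); last by move=> [[x y] []] _.
rewrite (integral_info_structure ha (ltW hab) hb HP (f := f)); last 2 first.
- apply: (measurableT_comp (f := fun y => c2 0 (g1 y) (g2 tt))) => //.
  exact: measurableT_comp.
- by move=> w; rewrite /f /c2; case: ifP => _; exact: sqr_ge0.
rewrite /f /= !integral_cst //= !lebesgue_measure_itv /= !lte_fin ha hab hb.
by rewrite -!EFinD -!EFinM; congr (_%:E); ring.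
Qed.

Lemma cell_means_best (g1 : Y1 -> R) (g2 : unit -> R) :
  (J P (@c1 R) (cell_means a b) g2 <= J P (@c1 R) g1 g2)%E.
Proof.
rewrite !J1E lee_fin lerD2r ler_pM2l // mse_gap_cell_means addr0 lerDl.
exact: mse_gap_ge0.
Qed.

Lemma nash_cell_means (g1 : Y1 -> R) (g2 : unit -> R) :
  Nash P g1 g2 -> g1 =1 cell_means a b.
Proof.
case=> _ _ /(_ _ cell_means_policy) + _.
rewrite !J1E lee_fin lerD2r ler_pM2l // mse_gap_cell_means addr0 gerDl => le0.
by apply: mse_gap_eq0; apply/le_anti; rewrite le0 mse_gap_ge0.
Qed.

Lemma J2_cell_means (g1 : Y1 -> R) (g2 : unit -> R) : g1 =1 cell_means a b ->
  J P (@c2 R) g1 g2 = ((g2 tt - (2 - zero_mass a b) / 2) ^+ 2 + nash_cost2 a b)%:E.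
Proof.
move=> Hg; rewrite J2E !Hg cell_means1 cell_means2 cell_means3 !c2E.
by rewrite /nash_cost2 /zero_mass; congr (_%:E); field.
Qed.

Lemma nash_equilibria :
  (exists g1 g2, Nash P g1 g2) /\
  (forall g1 g2, Nash P g1 g2 -> J P (@c2 R) g1 g2 = (nash_cost2 a b)%:E).
Proof.
set u0 := (2 - zero_mass a b) / 2.
have pu0 : policy2 (fun _ => u0).
  apply: policy2_cst; have /andP[p0 p2] := zero_mass_bounds.
  by apply/andP; split; rewrite /u0; lra.
split.
- exists (cell_means a b), (fun _ => u0); split.
  + exact: cell_means_policy.
  + exact: pu0.
  + by move=> g1' _; exact: cell_means_best.
  + move=> g2' _; rewrite !J2_cell_means // subrr expr0n /= add0r lee_fin lerDr.
    exact: sqr_ge0.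
- move=> g1 g2 N; have Hg := nash_cell_means N.
  case: N => _ _ _ /(_ _ pu0).
  rewrite !J2_cell_means // subrr expr0n /= add0r lee_fin gerDr => sq_le0.
  have -> : (g2 tt - u0) ^+ 2 = 0 by apply/le_anti; rewrite sq_le0 sqr_ge0.
  by rewrite add0r.
Qed.

End Cells.

Lemma nash_cost2_uncentred (a b : R) :
  (-1 + a) / 2 != 0 -> (a + b) / 2 != 0 -> (b + 1) / 2 != 0 -> nash_cost2 a b = 0.
Proof.
move=> h1 h2 h3.
by rewrite /nash_cost2 /zero_mass (negbTE h1) (negbTE h2) (negbTE h3) /=; ring.
Qed.

Lemma nash_cost2_centred : nash_cost2 (- 2^-1) 2^-1 = 4^-1.
Proof.
rewrite /nash_cost2 /zero_mass.
have -> : (-1 + - 2^-1) / 2 == 0 :> R = false by apply/negbTE/eqP; lra.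
have -> : (- 2^-1 + 2^-1) / 2 == 0 :> R = true by apply/eqP; lra.
have -> : (2^-1 + 1) / 2 == 0 :> R = false by apply/negbTE/eqP; lra.
by rewrite /=; field.
Qed.

Lemma zeta_le_half_leb (A : set R) : measurable A -> (@zeta R A <= 2^-1%:E * leb A)%E.
Proof.
move=> mA; rewrite -integral_cst // /zeta /uniform_prob /=.
apply: ge0_le_integral => //.
- by move=> x _; rewrite lee_fin uniform_pdf_ge0 // ltN11.
- apply/measurable_EFinP; apply: measurable_funTS; exact: measurable_uniform_pdf.
- move=> x _; rewrite lee_fin /uniform_pdf; case: ifP => _; last lra.
  by rewrite opprK.
Qed.

Lemma info_structure_le (P P' : probability (Omega R) R) (a b a' b' : R)
    (E : set R) :
  is_info_structure P a b -> is_info_structure P' a' b' -> measurable E ->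
  (forall x, ~ E x -> obs a b x = obs a' b' x) ->
  forall B, measurable B -> (P B <= P' B + @zeta R E)%E.
Proof.
move=> HP HP' mE hE B mB; rewrite (HP B mB) (HP' B mB).
have m1 : measurable (outcome a b @^-1` B).
  by rewrite -[X in measurable X]setTI; exact: measurable_outcome.
have m2 : measurable (outcome a' b' @^-1` B).
  by rewrite -[X in measurable X]setTI; exact: measurable_outcome.
apply: (le_trans (le_measure _ _ _ _)); last exact: measureU2.
- by rewrite inE.
- by rewrite inE; exact: measurableU.
move=> x /= Bx; have [Ex|nEx] := pselect (E x); first by right.
by left; rewrite /= /outcome -(hE x nEx).
Qed.

Lemma tv_le_disagreement (P P' : probability (Omega R) R) (a b a' b' : R)
    (E : set R) :
  is_info_structure P a b -> is_info_structure P' a' b' -> measurable E ->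
  (forall x, ~ E x -> obs a b x = obs a' b' x) ->
  (tv P P' <= 2%:E * @zeta R E)%E.
Proof.
move=> HP HP' mE hE; rewrite /tv; apply: lee_wpmul2l => //.
apply: ge_ereal_sup => _ [B mB <-].
have le1 := info_structure_le HP HP' mE hE mB.
have le2 := info_structure_le HP' HP mE (fun x h => esym (hE x h)) mB.
have f1 : P B \is a fin_num by apply: fin_num_measure.
have f2 : P' B \is a fin_num by apply: fin_num_measure.
have f3 : @zeta R E \is a fin_num by apply: fin_num_measure.
move: le1 le2; rewrite -(fineK f1) -(fineK f2) -(fineK f3) -!EFinD abse_EFin !lee_fin.
by move=> le1 le2; rewrite ler_norml; apply/andP; split; lra.
Qed.

Lemma obs_agree (a b a' b' x : R) : a' <= a -> b <= b' ->
  ~ (`[a', a] `|` `[b, b'])%classic x -> obs a' b' x = obs a b x.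
Proof.
move=> ha hb; rewrite /= !in_itv /= => /not_orP[/negP n1 /negP n2].
rewrite negb_and -!ltNge in n1; rewrite negb_and -!ltNge in n2.
rewrite /obs; case/orP: n1 => n1; case/orP: n2 => n2;
  case: (ltP x a') => h1; case: (ltP x a) => h2; case: (leP x b') => h3;
  case: (leP x b) => h4 //; exfalso; lra.
Qed.

Lemma tv_info_bound (P P' : probability (Omega R) R) (a b a' b' : R) :
  a' < a -> b < b' -> is_info_structure P a' b' -> is_info_structure P' a b ->
  (tv P P' <= ((a - a') + (b' - b))%:E)%E.
Proof.
move=> ha hb HP HP'.
pose E := (`[a', a] `|` `[b, b'])%classic.
have mE : measurable E by apply: measurableU.
have agree x : ~ E x -> obs a' b' x = obs a b x by apply: obs_agree; exact: ltW.
apply: (le_trans (tv_le_disagreement HP HP' mE agree)).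
apply: (le_trans (lee_wpmul2l _ (zeta_le_half_leb mE))) => //.
rewrite muleA -EFinM mulfV // mul1e.
apply: (le_trans (measureU2 _ _ _)) => //.
have itv_len (c d : R) : c < d -> (leb `[c, d]%classic <= (d - c)%:E)%E.
  by move=> cd; rewrite lebesgue_measure_itv /= lte_fin cd -EFinD.
by rewrite EFinD; apply: leeD; exact: itv_len.
Qed.

Lemma tv_ge0 (P Q : probability (Omega R) R) : (0 <= tv P Q)%E.
Proof.
rewrite /tv; apply: mule_ge0 => //.
apply: (le_trans (abse_ge0 (P set0 - Q set0)%E)).
by apply: ereal_sup_ubound; exists set0; [exact: measurable0 | by []].
Qed.

Lemma approx_cuts (m : nat) : (1 <= m)%N ->
  [/\ -1 < - 2^-1 - (8 * m%:R)^-1 :> R, - 2^-1 - (8 * m%:R)^-1 < - 2^-1 :> R,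
      2^-1 < 2^-1 + (4 * m%:R)^-1 :> R, 2^-1 + (4 * m%:R)^-1 < 1 :> R
    & 0 < (- 2^-1 - (8 * m%:R)^-1) + (2^-1 + (4 * m%:R)^-1) :> R].
Proof.
move=> m1; have e1 : 1 <= m%:R :> R by rewrite ler1n.
have t0 : 0 < m%:R^-1 :> R by rewrite invr_gt0; lra.
have t1 : m%:R^-1 <= 1 :> R by rewrite invf_le1 //; lra.
by rewrite !invfM; split; lra.
Qed.

Lemma margins_le_harmonic (m : nat) : (1 <= m)%N ->
  (8 * m%:R)^-1 + (4 * m%:R)^-1 <= (m.+1%:R)^-1 :> R.
Proof.
move=> m1; have e1 : 1 <= m%:R :> R by rewrite ler1n.
have e0 : 0 < m%:R :> R by lra.
have -> : (8 * m%:R)^-1 + (4 * m%:R)^-1 = 3 / 8 * (m%:R)^-1 :> R.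
  by field; rewrite gt_eqF.
have h : (2 * m%:R)^-1 <= (m.+1%:R)^-1 :> R.
  by rewrite -natr1 lef_pV2 ?posrE; lra.
have : 0 < m%:R^-1 :> R by rewrite invr_gt0.
move: h; rewrite invfM; set t := m%:R^-1; set s := m.+1%:R^-1; lra.
Qed.

Lemma tv_approx_cvg (mu_ : nat -> probability (Omega R) R)
    (mu : probability (Omega R) R) :
  (forall m : nat, (1 <= m)%N ->
     is_info_structure (mu_ m) (- 2^-1 - (8 * m%:R)^-1) (2^-1 + (4 * m%:R)^-1)) ->
  is_info_structure mu (- 2^-1) (2^-1) ->
  tv (mu_ m) mu @[m --> \oo] --> 0%E.
Proof.
move=> Hm Hmu.
apply: (@squeeze_cvge _ _ _ _ (fun _ => 0%E) _ (EFin \o harmonic)); last 2 first.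
- exact: cvg_cst.
- exact: cvge_harmonic.
exists 1%N => // m /= m1; apply/andP; split; first exact: tv_ge0.
have [_ c2 c3 _ _] := approx_cuts m1.
apply: (le_trans (tv_info_bound c2 c3 (Hm m m1) Hmu)); rewrite lee_fin.
have -> : forall s t : R, (- 2^-1 - (- 2^-1 - s)) + ((2^-1 + t) - 2^-1) = s + t.
  by move=> s t; ring.
exact: margins_le_harmonic.
Qed.

End InfoStructureGame.

Theorem mainTheorem11 (R : realType)
  (mu_ : nat -> probability (Omega R) R) (mu : probability (Omega R) R) :
  (forall m : nat, (1 <= m)%N ->
     is_info_structure (mu_ m) (- 2^-1 - (8 * m%:R)^-1) (2^-1 + (4 * m%:R)^-1)) ->
  is_info_structure mu (- 2^-1) (2^-1) ->
  [/\ (tv (mu_ m) mu @[m --> \oo] --> 0%E),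
      (forall m : nat, (1 <= m)%N ->
         (exists g1 g2, Nash (mu_ m) g1 g2) /\
         (forall g1 g2, Nash (mu_ m) g1 g2 -> J (mu_ m) (@c2 R) g1 g2 = 0%E)) &
      ((exists g1 g2, Nash mu g1 g2) /\
       (forall g1 g2, Nash mu g1 g2 -> J mu (@c2 R) g1 g2 = (4^-1)%:E))].
Proof.
move=> Hm Hmu; split.
- exact: tv_approx_cvg.
- move=> m m1; have [c1 c2 c3 c4 c5] := approx_cuts R m1.
  have hab : - 2^-1 - (8 * m%:R)^-1 < 2^-1 + (4 * m%:R)^-1 :> R by lra.
  have [ex cost] := nash_equilibria c1 hab c4 (Hm m m1).
  split=> // g1 g2 /cost ->; rewrite nash_cost2_uncentred //; apply/eqP; lra.
- have c1 : -1 < - 2^-1 :> R by lra.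
  have c2 : - 2^-1 < 2^-1 :> R by lra.
  have c3 : 2^-1 < 1 :> R by lra.
  have [ex cost] := nash_equilibria c1 c2 c3 Hmu.
  by split=> // g1 g2 /cost ->; rewrite nash_cost2_centred.
Qed.
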